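(* Let $q$ be an even prime power (a power of $2$), $m,n\ge1$, let $\mathscr{C}\subseteq\mathrm{GF}(q^m)^n$ be a scalable code and let $\mathscr{B}$ be a basis of $\mathrm{GF}(q^m)$ over $\mathrm{GF}(q)$. If $\mathrm{Im}_{\mathscr{B}}(\mathscr{C})\subseteq\mathrm{GF}(q)^{mn}$ is self-orthogonal w.r.t. the canonical inner product $\sum_{i=1}^{mn}x_iy_i$, then $\mathscr{C}$ is self-orthogonal w.r.t. the canonical inner product $\sum_{i=1}^n x_iy_i$ on $\mathrm{GF}(q^m)^n$.
   Context: $\mathrm{Tr}:\mathrm{GF}(q^m)\to\mathrm{GF}(q)$, $\mathrm{Tr}(a)=\sum_{i=0}^{m-1}a^{q^i}$. The dual basis of a basis $\{\gamma_1,\ldots,\gamma_m\}$ is the unique basis $\{\beta_1,\ldots,\beta_m\}$ with $\mathrm{Tr}(\gamma_i\beta_j)=\delta_{ij}$. A code $\mathscr{C}\subseteq\mathrm{GF}(q^m)^n$ is scalable if $x\in\mathscr{C}\Rightarrow\alpha x\in\mathscr{C}$ for all $\alpha\in\mathrm{GF}(q^m)$. For a basis $\mathscr{B}$ with dual basis $\{\beta_1,\ldots,\beta_m\}$, $\mathrm{Im}_{\mathscr{B}}(\mathscr{C})=\{(\mathrm{Tr}(\beta_1x_1),\ldots,\mathrm{Tr}(\beta_1x_n),\ldots,\mathrm{Tr}(\beta_mx_1),\ldots,\mathrm{Tr}(\beta_mx_n)):x\in\mathscr{C}\}$. A code $D$ is self-orthogonal w.r.t. a form $g$ if $g(x,y)=0$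 for all $x,y\in D$. *)

From HB Require Import structures.
From mathcomp Require Import all_boot all_order all_algebra all_field.
Set Implicit Arguments. Unset Strict Implicit. Unset Printing Implicit Defensive.
Import GRing.Theory.
Local Open Scope ring_scope.

(* GF(q) is modelled by a finite field F (q = #|F|), GF(q^m) by a finite
   dimensional field extension L of F, with m = \dim {:L}. *)

(* Trace Tr : GF(q^m) -> GF(q), Tr a = sum_{i<m} a^(q^i), valued in L
   (its values lie in the image of F). *)
Definition Tr (F : finFieldType) (L : fieldExtType F) (a : L) : L :=
  \sum_(i < \dim {:L}) a ^+ (#|F| ^ i)%N.

Definition is_dual_basis (F : finFieldType) (L : fieldExtType F)
    (gam : (\dim {:L}).-tuple L) (beta : (\dim {:L}).-tuple L) : Prop :=
  basis_of fullv beta /\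
  forall i j : 'I_(\dim {:L}),
    Tr (tnth gam i * tnth beta j) = (i == j)%:R.

Definition scalable_code (F : finFieldType) (L : fieldExtType F) (n : nat)
    (C : 'rV[L]_n -> Prop) : Prop :=
  forall (x : 'rV[L]_n) (a : L), C x -> C (a *: x).

(* Im_B(C) is self-orthogonal w.r.t. the canonical inner product on GF(q)^{mn};
   the coordinates Tr(beta_i x_j) are computed in L. *)
Definition image_self_orthogonal (F : finFieldType) (L : fieldExtType F)
    (n : nat) (beta : (\dim {:L}).-tuple L) (C : 'rV[L]_n -> Prop) : Prop :=
  forall x y : 'rV[L]_n, C x -> C y ->
    \sum_(i < \dim {:L}) \sum_(j < n)
      Tr (tnth beta i * x ord0 j) * Tr (tnth beta i * y ord0 j) = 0.

Definition self_orthogonal (F : finFieldType) (L : fieldExtType F)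
    (n : nat) (C : 'rV[L]_n -> Prop) : Prop :=
  forall x y : 'rV[L]_n, C x -> C y -> \sum_(j < n) x ord0 j * y ord0 j = 0.

From mathcomp Require Import all_boot all_order all_algebra all_field.
Set Implicit Arguments. Unset Strict Implicit. Unset Printing Implicit Defensive.
Import GRing.Theory.
Local Open Scope ring_scope.

(* Scaling x by a in the self-orthogonality relation of the image code
   turns its left-hand side into a q-polynomial sum_k c_k a^(q^k) of degree
   < q^m vanishing on all of GF(q^m); hence its coefficients vanish, and the
   coefficient of a is the same relation with the first trace removed.
   Doing this again for y removes the second trace, leaving
   sum_(i,j) beta_i^2 x_j y_j = (sum_i beta_i)^2 <x, y> = 0 in characteristic
   2, while sum_i beta_i <> 0 because the beta_i are free. *)

Lemma sqr_sum_pchar2 (R : comNzRingType) (I : Type) (r : seq I) (f : I -> R) :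
  (2 \in [pchar R])%N -> (\sum_(i <- r) f i) ^+ 2 = \sum_(i <- r) f i ^+ 2.
Proof.
move=> ch2; rewrite -(pFrobenius_autE ch2) rmorph_sum.
by apply: eq_bigr => i _; exact: pFrobenius_autE.
Qed.

Lemma free_sum_neq0 (K : fieldType) (vT : vectType K) (X : seq vT) :
  free X -> X != [::] -> \sum_(v <- X) v != 0.
Proof.
case: X => [|v X] //; rewrite free_cons big_cons addr_eq0 => /andP[vNX _] _.
apply: contra vNX => /eqP ->.
by rewrite rpredN big_seq rpred_sum // => w /memv_span.
Qed.

Section QPolynomials.

Variables (F : finFieldType) (L : fieldExtType F).
Local Notation q := #|F|.
Local Notation m := (\dim {:L}).

Lemma card_fieldExt : #|finvect_type L| = (q ^ m)%N.
Proof.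
by rewrite -(card_vspacef (Vector.class (finvect_type L))) card_vspace.
Qed.

Lemma qpoly_coef_eq0 (c : 'I_m -> L) :
  (forall a : L, \sum_(k < m) c k * a ^+ (q ^ k) = 0) -> forall k, c k = 0.
Proof.
move=> c_root; have q_gt1 : (1 < q)%N := finNzRing_gt1 F.
pose P : {poly L} := \sum_(k < m) c k *: 'X^(q ^ k).
have coefP (k : 'I_m) : P`_(q ^ k) = c k.
  rewrite coef_sum (bigD1 k) //= coefZ coefXn eqxx mulr1 big1 ?addr0 // => l lk.
  by rewrite coefZ coefXn eqn_exp2l // eq_sym (val_eqE l k) (negbTE lk) mulr0.
suff P0 : P = 0 by move=> k; rewrite -coefP P0 coef0.
apply/eqP; apply: contraT => P_neq0.
have sizeP : (size P <= q ^ m)%N.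
  apply: (leq_trans (size_sum _ _ _)); apply/bigmax_leqP => k _.
  by rewrite (leq_trans (size_scale_leq _ _)) // size_polyXn ltn_exp2l.
have rootP : all (root P) (enum (finvect_type L)).
  apply/allP => a _; apply/eqP; rewrite horner_sum -[RHS](c_root a).
  by under eq_bigr do rewrite hornerZ hornerXn.
have := max_poly_roots P_neq0 rootP (enum_uniq _).
have -> : size (enum (finvect_type L) : seq L) = (q ^ m)%N.
  by rewrite -card_fieldExt cardE.
by rewrite ltnNge sizeP.
Qed.

Lemma sum_Tr_scale_eq0 (I : finType) (u t : I -> L) :
  (forall a : L, \sum_(s : I) Tr (a * u s) * t s = 0) ->
  \sum_(s : I) u s * t s = 0.
Proof.
move=> Tr_eq0; have m_gt0 : (0 < m)%N := adim_gt0 (fullv : {subfield L}).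
suff /(_ (Ordinal m_gt0)) : forall k : 'I_m, \sum_s u s ^+ (q ^ k) * t s = 0.
  by rewrite expn0; under eq_bigr do rewrite expr1.
apply: qpoly_coef_eq0 => a; rewrite -[RHS](Tr_eq0 a) /Tr; apply/esym.
under eq_bigr do rewrite big_distrl.
rewrite exchange_big; apply: eq_bigr => k _.
rewrite big_distrl; apply: eq_bigr => s _.
by rewrite exprMn /= [RHS]mulrC mulrA.
Qed.

End QPolynomials.

Theorem proposition2 (F : finFieldType) (L : fieldExtType F) (n : nat)
    (C : 'rV[L]_n -> Prop) (gam beta : (\dim {:L}).-tuple L) :
  (2 \in [pchar F])%N ->
  (0 < n)%N ->
  @scalable_code F L n C ->
  basis_of fullv gam ->
  @is_dual_basis F L gam beta ->
  @image_self_orthogonal F L n beta C ->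
  @self_orthogonal F L n C.
Proof.
move=> ch2 _ scalC _ [beta_basis _] imgC x y Cx Cy.
have beta_sum_neq0 : \sum_(i < \dim {:L}) tnth beta i != 0.
  rewrite -(big_tuple _ _ _ xpredT id).
  rewrite free_sum_neq0 ?(basis_free beta_basis) //.
  apply: contraTneq (adim_gt0 (fullv : {subfield L})) => beta_nil.
  by rewrite -(size_tuple beta) beta_nil.
have trace_x v : C v -> \sum_(p : 'I_(\dim {:L}) * 'I_n)
    (tnth beta p.1 * x ord0 p.2) * Tr (tnth beta p.1 * v ord0 p.2) = 0.
  move=> Cv; apply: sum_Tr_scale_eq0 => a.
  rewrite -[RHS](imgC _ _ (scalC x a Cx) Cv) pair_bigA.
  by apply: eq_bigr => -[i j] _; rewrite mxE [a * _]mulrCA.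
have : \sum_(i < \dim {:L}) \sum_(j < n)
    (tnth beta i * y ord0 j) * (tnth beta i * x ord0 j) = 0.
  rewrite pair_bigA; apply: sum_Tr_scale_eq0 => b.
  rewrite -[RHS](trace_x _ (scalC y b Cy)).
  by apply: eq_bigr => -[i j] _; rewrite mxE [RHS]mulrC [b * _]mulrCA.
under eq_bigr do under eq_bigr do rewrite mulrACA -expr2 (mulrC (y _ _)).
under eq_bigr do rewrite -mulr_sumr.
rewrite -mulr_suml -sqr_sum_pchar2 ?(pchar_lalg L) // => /eqP.
rewrite mulf_eq0 expf_eq0 /= (negbTE beta_sum_neq0) => /eqP //.
Qed.
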